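(* As an abelian group, $H=F[1/t]$ is free.
   Context: $F\subseteq\mathbb{Q}[t]$ is the ring of numerical polynomials (polynomials $f$ with $f(n)\in\mathbb{Z}$ for all integers $n\gg0$), and $H=F[1/t]$ is its localization at $t$, viewed as a subring of $\mathbb{Q}[t,1/t]$. *)

From HB Require Import structures.
From mathcomp Require Import all_boot all_order all_algebra fraction.
Set Implicit Arguments. Unset Strict Implicit. Unset Printing Implicit Defensive.
Import Order.TTheory GRing.Theory Num.Theory.
Local Open Scope ring_scope.

(* Q(t): rational functions over Q; the Laurent ring Q[t,1/t] sits inside. *)
Definition Qt := {fraction {poly rat}}.

Definition numerical (f : {poly rat}) : Prop :=
  exists N : int, forall n : int, (N <= n)%R -> f.[n%:~R] \is a Num.int.

(* H = F[1/t] = { f / t^k : f numerical, k in nat } as a subset of Q[t,1/t]. *)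
Definition inH (x : Qt) : Prop :=
  exists (f : {poly rat}) (k : nat), numerical f /\ x = @FracField.tofrac _ f / (@FracField.tofrac _ 'X) ^+ k.

Definition free_abelian_with_basis (V : zmodType) (S B : V -> Prop) : Prop :=
  (forall b, B b -> S b) /\
  (forall (s : seq V) (c : V -> int), uniq s -> (forall b, b \in s -> B b) ->
     \sum_(b <- s) b *~ c b = 0 -> forall b, b \in s -> c b = 0) /\
  (forall x, S x -> exists (s : seq V) (c : V -> int),
     (forall b, b \in s -> B b) /\ x = \sum_(b <- s) b *~ c b).

Definition free_abelian (V : zmodType) (S : V -> Prop) : Prop :=
  exists B : V -> Prop, free_abelian_with_basis S B.

From mathcomp Require Import all_boot all_order all_algebra fraction.
From mathcomp Require Import ring zify boolp.
Set Implicit Arguments. Unset Strict Implicit. Unset Printing Implicit Defensive.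
Import Order.TTheory GRing.Theory Num.Theory.
Local Open Scope ring_scope.

(* [H] is the union of the chain [H_0 <= H_1 <= ...], where [H_j] consists of
   the Laurent polynomials of [H] supported on the exponents [-(j/2) .. (j+1)/2]:
   each step adds one exponent, alternately on the right and on the left.
   Reading off the coefficient of the new exponent embeds [H_j / H_(j-1)] into
   [Q].  The image has bounded denominators: if [p] has degree at most [d] and
   [t^m p] is numerical, then a prime-by-prime interpolation argument bounds the
   denominators of the coefficients of [p] by a constant depending on [d] only,
   not on [m].  Hence every quotient is infinite cyclic, and lifting generators
   of all of them yields a Z-basis of [H]. *)

(** * Denominators of integer-valued polynomials *)

Lemma intr_divr_int (a b : int) : b != 0 ->
  ((a%:~R / b%:~R : rat) \is a Num.int) = (b %| a)%Z.
Proof.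
move=> b0; apply/idP/idP => [/intrP [k hk]|]; last first.
  by rewrite dvdz_eq => /eqP <-; rewrite intrM mulfK ?intr_eq0.
have : a%:~R = (k * b)%:~R :> rat by rewrite intrM -hk mulfVK ?intr_eq0.
by move/intr_inj ->; apply: dvdz_mull.
Qed.

Lemma prime_coprime_fact p n : prime p -> (n < p)%N -> coprime p n`!.
Proof.
move=> pr_p; elim: n => [|n IHn] ltnp; first by rewrite fact0 coprimen1.
rewrite factS coprimeMr IHn; last exact: ltnW.
by rewrite andbT (prime_coprime _ pr_p); apply/negP => /dvdn_leq; lia.
Qed.

(* Lagrange interpolation at the nodes [a + s j]: the denominators of the
   Lagrange basis divide [(s * d!) ^ d]. *)
Lemma progression_polyOverZ (d : nat) (a s : int) (K : {poly rat}) :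
  s != 0 -> (size K <= d.+1)%N ->
  (forall j : nat, (j <= d)%N -> K.[(a + s * j%:Z)%:~R] \is a Num.int) ->
  ((s * d`!%:Z) ^+ d)%:~R *: K \is a polyOver Num.int_num_subdef.
Proof.
move=> s0 szK Kint.
pose x (j : nat) : rat := (a + s * j%:Z)%:~R.
have x_inj : injective x by move=> i j /intr_inj /addrI /(mulfI s0) [].
rewrite [K](@lagrange_gen _ d.+1 x) // scaler_sumr; apply: rpred_sum => i _.
rewrite (lagrangeE (ltn0Sn d) x_inj) /=; set P := \prod_(j < d.+1 | j != i) _.
rewrite mulrA -polyCM scalerAl scale_polyC mul_polyC.
apply: polyOverZ; last first.
  by apply: rpred_prod => j _; rewrite polyOverXsubC intr_int.
have Px : P.[x i] = \prod_(j < d.+1 | j != i) (s * (i%:Z - j%:Z))%:~R.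
  rewrite /P horner_prod; apply: eq_bigr => j _.
  by rewrite hornerXsubC /x -intrB; congr intmul; ring.
have scale_Px : ((s * d`!%:Z) ^+ d)%:~R / P.[x i] \is a Num.int.
  have -> : ((s * d`!%:Z) ^+ d)%:~R = \prod_(j < d.+1 | j != i) (s * d`!%:Z)%:~R :> rat.
    by rewrite prodr_const cardC1 card_ord rmorphXn.
  rewrite Px -prodf_div; apply: rpred_prod => j ji.
  have ij : i%:Z - j%:Z != 0.
    by rewrite subr_eq0 eqz_nat; apply: contra ji => /eqP ij; apply/eqP/val_inj.
  rewrite !intrM invfM mulrACA mulfV ?intr_eq0 // mul1r intr_divr_int //.
  apply: dvdn_fact; rewrite absz_gt0 ij /=.
  by have := ltn_ord i; have := ltn_ord j; lia.
rewrite mulrCA; apply: rpredM scale_Px.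
by apply: Kint; rewrite -ltnS.
Qed.

Lemma progression_dvdz (d : nat) (q : {poly int}) (Q a s : int) :
  Q != 0 -> s != 0 -> (size q <= d.+1)%N ->
  (forall j : nat, (j <= d)%N -> (Q %| q.[a + s * j%:Z])%Z) ->
  forall u, (Q %| (s * d`!%:Z) ^+ d * q.[u])%Z.
Proof.
move=> Q0 s0 szq Qdvd u.
pose K : {poly rat} := Q%:~R^-1 *: map_poly intr q.
have Kq v : K.[v%:~R] = q.[v]%:~R / Q%:~R by rewrite hornerZ horner_map mulrC.
have szK : (size K <= d.+1)%N by rewrite (leq_trans (size_scale_leq _ _)) ?size_rat_int_poly.
have Kint j : (j <= d)%N -> K.[(a + s * j%:Z)%:~R] \is a Num.int.
  by move/Qdvd; rewrite Kq intr_divr_int.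
have := rpred_horner (progression_polyOverZ s0 szK Kint) (intr_int rat u).
by rewrite hornerZ Kq mulrA -intrM intr_divr_int.
Qed.

Lemma dvdz_scaled_values (d m : nat) (q : {poly int}) (a N : int) :
  a != 0 -> (size q <= d.+1)%N ->
  (forall u, N <= u -> (a %| u ^+ m * q.[u])%Z) ->
  forall n, N <= n -> (a %| ((d.+1)`! * d`!)%:Z ^+ d * q.[n])%Z.
Proof.
(* Fix a prime [r] and let [Q] be the [r]-part of [a].  If [r] does not divide
   [n], then [Q] divides [q(n)].  Otherwise interpolate [q] along a progression
   through [n + 1] that avoids the multiples of [r]: with step [r] when
   [r <= d + 1], with step 1 (and then [Q] is coprime to [d!]) when [r > d + 1]. *)
move=> a0 szq a_dvd n Nn; rewrite dvdzE abszM abszX absz_nat.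
apply/dvdn_partP => [|r]; first by rewrite absz_gt0.
rewrite mem_primes => /and3P [pr_r _ _]; set Q := (`|a|`_r)%N.
suff : (Q%:Z %| ((d.+1)`! * d`!)%:Z ^+ d * q.[n])%Z.
  by rewrite dvdzE abszM abszX !absz_nat.
have Q0 : Q%:Z != 0 by rewrite eqz_nat -lt0n part_gt0.
have Q_dvd u : N <= u -> ~~ (r%:Z %| u)%Z -> (Q%:Z %| q.[u])%Z.
  move=> Nu ru; move: (a_dvd u Nu); rewrite dvdzE abszM abszX.
  move=> /(dvdn_trans (dvdn_part r _)).
  by rewrite Gauss_dvdr // /Q p_part coprimeXl // coprimeXr // prime_coprime.
have [rn|rn] := boolP (r%:Z %| n)%Z; last exact/dvdz_mull/Q_dvd.
have Q_dvd_prog (s : int) : 0 < s ->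
    (forall j : nat, (j <= d)%N -> ~~ (r%:Z %| 1 + s * j%:Z)%Z) ->
    (Q%:Z %| (s * d`!%:Z) ^+ d * q.[n])%Z.
  move=> s0 rs; apply: (progression_dvdz (a := n + 1) Q0 (lt0r_neq0 s0) szq) => j jd.
  apply: Q_dvd; first by nia.
  by rewrite -addrA (rpredDl _ rn) rs.
have r_gt1 := prime_gt1 pr_r.
have [r_le|r_gt] := leqP r d.+1.
  apply: dvdz_trans (Q_dvd_prog r%:Z _ _) (dvdz_mul (dvdz_exp2r _ _) (dvdzz _)).
  - by rewrite ltz_nat prime_gt0.
  - move=> j _; rewrite (rpredDr _ (dvdz_mulr _ (dvdzz _))) dvdz1 absz_nat.
    by rewrite (gtn_eqF r_gt1).
  - rewrite -PoszM dvdzE !absz_nat dvdn_mul ?dvdnn //.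
    by apply/dvdn_fact/andP; split; [exact: prime_gt0 | exact: r_le].
have r_prog j : (j <= d)%N -> ~~ (r%:Z %| 1 + 1 * j%:Z)%Z.
  rewrite mul1r -PoszD dvdzE !absz_nat add1n => jd.
  by apply/negP => /dvdn_leq; lia.
have := Q_dvd_prog 1 ltr01 r_prog; rewrite mul1r !dvdzE !abszM !abszX !absz_nat.
rewrite Gauss_dvdr => [Qq|]; first by rewrite dvdn_mull.
by rewrite /Q p_part; apply/coprimeXl/coprimeXr/prime_coprime_fact/ltnW.
Qed.

Lemma numerical_coef_denominator (d : nat) : exists2 D : nat, (0 < D)%N &
  forall (m : nat) (p : {poly rat}), (size p <= d.+1)%N -> numerical ('X^m * p) ->
  forall i, D%:R * p`_i \is a Num.int.
Proof.
pose C := (((d.+1)`! * d`!) ^ d)%N.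
exists (d`! ^ d * C)%N; first by rewrite /C !(muln_gt0, expn_gt0, fact_gt0).
move=> m p szp [N p_int] i.
have [q [a a0 p_q]] := rat_poly_scale p.
have pq u : p.[u%:~R] = q.[u]%:~R / a%:~R by rewrite p_q hornerZ horner_map mulrC.
have szq : (size q <= d.+1)%N.
  by move: szp; rewrite p_q size_scale ?invr_eq0 ?intr_eq0 // size_rat_int_poly.
have a_dvd u : N <= u -> (a %| u ^+ m * q.[u])%Z.
  by move/p_int; rewrite hornerM hornerXn pq mulrA -rmorphXn -intrM intr_divr_int.
have Cp_int (j : nat) : (j <= d)%N -> (C%:R *: p).[(N + 1 * j%:Z)%:~R] \is a Num.int.
  move=> _; rewrite hornerZ pq mulrA -[C%:R]/(C%:Z%:~R) -intrM intr_divr_int //.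
  have -> : C%:Z = ((d.+1)`! * d`!)%:Z ^+ d by rewrite /C -natz natrX natz.
  by apply: (dvdz_scaled_values a0 szq a_dvd); lia.
have szCp : (size (C%:R *: p) <= d.+1)%N := leq_trans (size_scale_leq _ _) szp.
have /polyOverP/(_ i) := progression_polyOverZ (oner_neq0 _) szCp Cp_int.
by rewrite !coefZ mulrA mul1r natrM -rmorphXn.
Qed.

(** * Filtered groups with cyclic subquotients *)

Lemma subgroup_mulz (V : zmodType) (G : V -> Prop) :
  G 0 -> (forall x y, G x -> G y -> G (x - y)) -> forall x k, G x -> G (x *~ k).
Proof.
move=> G0 GB x k Gx; have GN y : G y -> G (- y) by rewrite -sub0r; apply: GB.
have GMn n : G (x *+ n).
  elim: n => [|n IHn]; first by rewrite mulr0n.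
  by rewrite mulrS -[x *+ n]opprK; apply/GB/GN.
by case: k => n; [exact: GMn | exact/GN/GMn].
Qed.

Lemma int_subgroup_cyclic (G : int -> Prop) :
  G 0 -> (forall x y, G x -> G y -> G (x - y)) -> (exists2 x, G x & x != 0) ->
  exists2 g : nat, (0 < g)%N /\ G g & forall x, G x -> (g%:Z %| x)%Z.
Proof.
move=> G0 GB [x0 Gx0 x0_neq0].
have G_pos : exists n : nat, `[< (0 < n)%N /\ G n >].
  exists `|x0|%N; apply/asboolP; split; first by rewrite absz_gt0.
  have [x0_ge0|x0_lt0] := ger0P x0; rewrite abszE; first by rewrite ger0_norm.
  by rewrite ltr0_norm // -sub0r; apply: GB.
case: (ex_minnP G_pos) => g /asboolP [g_gt0 Gg] g_min; exists g => // x Gx.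
have g_neq0 : g%:Z != 0 by rewrite eqz_nat -lt0n.
apply/dvdz_mod0P; set r := (x %% g%:Z)%Z.
have Gr : G r.
  rewrite [r](_ : _ = x - g%:Z *~ (x %/ g%:Z)%Z).
    exact: GB Gx (subgroup_mulz G0 GB _ Gg).
  by apply/eqP; rewrite eq_sym subr_eq -mulrzl intz addrC -divz_eq.
have r_ge0 : 0 <= r := modz_ge0 x g_neq0.
have r_lt : r < g%:Z by apply: ltz_pmod; rewrite ltz_nat.
apply/eqP; rewrite eq_le r_ge0 andbT leNgt; apply/negP => r_gt0.
have : (g <= `|r|)%N by apply: g_min; apply/asboolP; rewrite absz_gt0 gt_eqF // gez0_abs.
by lia.
Qed.

Lemma rat_subgroup_cyclic (G : rat -> Prop) (D : nat) : (0 < D)%N ->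
  G 0 -> (forall x y, G x -> G y -> G (x - y)) ->
  (forall x, G x -> D%:R * x \is a Num.int) -> (exists2 x, G x & x != 0) ->
  exists2 g, G g & g != 0 /\ forall x, G x -> exists k : int, x = g *~ k.
Proof.
move=> D_gt0 G0 GB G_int [x0 Gx0 x0_neq0].
have D_neq0 : (D%:R : rat) != 0 by rewrite pnatr_eq0 -lt0n.
pose Gz (z : int) := G (z%:~R / D%:R).
have Gz_num x : G x -> exists2 z, Gz z & x = z%:~R / D%:R.
  move=> Gx; have /intrP [z Dx] := G_int x Gx.
  by exists z; rewrite /Gz -Dx [_ / _]mulrC mulKf.
have [g [g_gt0 Gz_g] g_dvd] : exists2 g : nat, (0 < g)%N /\ Gz g &
    forall z, Gz z -> (g%:Z %| z)%Z.
  apply: int_subgroup_cyclic; first by rewrite /Gz mul0r.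
    by move=> z w; rewrite /Gz intrB mulrBl; apply: GB.
  have [z Gz_z x0_z] := Gz_num _ Gx0; exists z => //.
  by apply: contra x0_neq0 => /eqP z0; rewrite x0_z z0 mul0r.
exists (g%:R / D%:R) => //; split.
  by rewrite mulf_neq0 ?invr_eq0 // pnatr_eq0 -lt0n.
move=> x /Gz_num [z /g_dvd /dvdzP [k ->] ->].
by exists k; rewrite -[_ *~ k]mulrzl intrM mulrA.
Qed.

Lemma seq_image_iota (T : eqType) (e : nat -> T) (s : seq T) :
  (forall b, b \in s -> exists i, b = e i) ->
  exists n, {subset s <= [seq e i | i <- iota 0 n]}.
Proof.
elim: s => [|a s IHs] s_e; first by exists 0%N.
have [n s_sub] : exists n, {subset s <= [seq e i | i <- iota 0 n]}.
  by apply: IHs => b bs; apply: s_e; rewrite inE bs orbT.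
have [i ->] := s_e a (mem_head _ _).
exists (maxn n i.+1) => b /predU1P [->|/s_sub/mapP [k]].
  by apply: map_f; rewrite mem_iota leq_max ltnSn orbT.
rewrite mem_iota add0n => /andP [_ k_lt] ->.
by apply: map_f; rewrite mem_iota add0n leq_max k_lt.
Qed.

Lemma big_uniq_image (V : zmodType) (T : eqType) (e : nat -> T) (s : seq T) n (F : T -> V) :
  injective e -> uniq s -> {subset s <= [seq e i | i <- iota 0 n]} ->
  \sum_(b <- s) F b = \sum_(i < n | e i \in s) F (e i).
Proof.
move=> e_inj s_uniq s_sub.
rewrite -(big_mkord (fun i => e i \in s) (fun i => F (e i))) /index_iota subn0.
rewrite -(big_map e (fun b => b \in s) F) -big_filter.
apply: perm_big; apply: uniq_perm => // [|b].
  by rewrite filter_uniq // map_inj_uniq // iota_uniq.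
by rewrite mem_filter; apply/idP/andP => [bs|[]//]; split=> //; apply: s_sub.
Qed.

Section FiltrationBasis.

Variables (V : zmodType) (S : nat -> V -> Prop) (phi : nat -> V -> rat).
Hypotheses
  (S0 : forall j, S j 0)
  (SB : forall j x y, S j x -> S j y -> S j (x - y))
  (phiB : forall j x y, S j x -> S j y -> phi j (x - y) = phi j x - phi j y)
  (S_succ : forall j x, S j x -> S j.+1 x)
  (phi_succ : forall j x, S j x -> phi j.+1 x = 0)
  (phi0_inj : forall x, S 0 x -> phi 0 x = 0 -> x = 0)
  (phi_ker : forall j x, S j.+1 x -> phi j.+1 x = 0 -> S j x)
  (phi_denom : forall j, exists2 D : nat, (0 < D)%N &
     forall x, S j x -> D%:R * phi j x \is a Num.int)
  (phi_nontriv : forall j, exists2 x, S j x & phi j x != 0).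

Lemma phi0 j : phi j 0 = 0.
Proof. by have := phiB (S0 j) (S0 j); rewrite !subrr. Qed.

Lemma SN j x : S j x -> S j (- x).
Proof. by rewrite -sub0r; apply: SB. Qed.

Lemma SD j x y : S j x -> S j y -> S j (x + y).
Proof. by move=> Sx Sy; rewrite -[y]opprK; apply/SB/SN. Qed.

Lemma phiN j x : S j x -> phi j (- x) = - phi j x.
Proof. by move=> Sx; rewrite -sub0r phiB // phi0 sub0r. Qed.

Lemma phiD j x y : S j x -> S j y -> phi j (x + y) = phi j x + phi j y.
Proof. by move=> Sx Sy; rewrite -{1}[y]opprK phiB ?phiN ?opprK //; apply: SN. Qed.

Lemma S_mulz j x k : S j x -> S j (x *~ k) /\ phi j (x *~ k) = phi j x *~ k.
Proof.
move=> Sx; have Smulz n : S j (x *~ n) := subgroup_mulz (S0 j) (@SB j) n Sx.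
split=> //; have phiMn n : phi j (x *+ n) = phi j x *+ n.
  elim: n => [|n IHn]; first by rewrite !mulr0n phi0.
  by rewrite !mulrS phiD ?IHn //; apply: (Smulz n).
by case: k => n; rewrite /intmul ?phiN ?phiMn //; apply: (Smulz n.+1).
Qed.

Lemma S_comb j n (b : nat -> V) (c : nat -> int) :
  (forall i, (i < n)%N -> S j (b i)) ->
  S j (\sum_(i < n) b i *~ c i) /\
  phi j (\sum_(i < n) b i *~ c i) = \sum_(i < n) phi j (b i) *~ c i.
Proof.
move=> Sb; apply: (big_ind2 (fun x r => S j x /\ phi j x = r)).
- by rewrite phi0.
- by move=> x r y t [Sx <-] [Sy <-]; rewrite phiD //; split=> //; apply: SD.
- by move=> i _; apply/S_mulz/Sb.
Qed.

Lemma S_le i j x : (i <= j)%N -> S i x -> S j x.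
Proof.
move/subnK <-; elim: (j - i)%N => [|k IHk] Sx //.
by rewrite addSn; apply/S_succ/IHk.
Qed.

Lemma phi_lt i j x : (i < j)%N -> S i x -> phi j x = 0.
Proof. by case: j => // j ij Sx; apply: phi_succ (S_le (ij : (i <= j)%N) Sx). Qed.

Lemma phi_cyclic j : exists e, [/\ S j e, phi j e != 0 &
  forall x, S j x -> exists k : int, phi j x = phi j e *~ k].
Proof.
have [D D_gt0 D_int] := phi_denom j.
pose G r := exists2 x, S j x & phi j x = r.
have [||||g [e Se <-] [g_neq0 g_gen]] := @rat_subgroup_cyclic G D D_gt0.
- by exists 0; rewrite ?phi0.
- by move=> _ _ [x Sx <-] [y Sy <-]; exists (x - y); rewrite ?phiB //; apply: SB.
- by move=> _ [x Sx <-]; apply: D_int.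
- by have [x Sx x_neq0] := phi_nontriv j; exists (phi j x) => //; exists x.
by exists e; split=> // x Sx; apply: g_gen; exists x.
Qed.

Definition gen j : V := sval (cid (phi_cyclic j)).

Lemma genP j : [/\ S j (gen j), phi j (gen j) != 0 &
  forall x, S j x -> exists k : int, phi j x = phi j (gen j) *~ k].
Proof. exact: svalP (cid (phi_cyclic j)). Qed.

Lemma gen_inj : injective gen.
Proof.
move=> i j; wlog ij : i j / (i < j)%N => [W eq_ij|eq_ij].
  by case: (ltngtP i j) => [ij|ji|//]; [apply: W | rewrite (W _ _ ji (esym eq_ij))].
have [_ + _] := genP j; have [Si _ _] := genP i.
by rewrite -eq_ij (phi_lt ij Si) eqxx.
Qed.

Lemma gen_indep n (c : nat -> int) :
  \sum_(i < n) gen i *~ c i = 0 -> forall i, (i < n)%N -> c i = 0.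
Proof.
elim: n => [|n IHn] //; rewrite big_ord_recr /= => sum0.
have Sgen i : (i < n)%N -> S n (gen i).
  by move=> lt_in; have [Si _ _] := genP i; apply: S_le (ltnW lt_in) Si.
have [Srest phi_rest] := S_comb c Sgen.
have rest0 : phi n (\sum_(i < n) gen i *~ c i) = 0.
  rewrite phi_rest big1 // => i _; have [Si _ _] := genP i.
  by rewrite (phi_lt (ltn_ord i) Si) mul0rz.
have [Sn gn_neq0 _] := genP n; have [Sgn phi_gn] := S_mulz (c n) Sn.
have cn0 : c n = 0.
  have := congr1 (phi n) sum0; rewrite phiD // rest0 phi_gn add0r phi0.
  by move/eqP; rewrite -mulrzr mulf_eq0 (negPf gn_neq0) intr_eq0 => /eqP.
move: sum0; rewrite cn0 mulr0z addr0 => /IHn c0 i.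
by rewrite ltnS leq_eqVlt => /predU1P [->|/c0].
Qed.

Lemma gen_reduce j x : S j x ->
  exists k : int, S j (x - gen j *~ k) /\ phi j (x - gen j *~ k) = 0.
Proof.
move=> Sx; have [Sg _ gen_j] := genP j; have [k phi_k] := gen_j x Sx.
have [Sgk phi_gk] := S_mulz k Sg.
by exists k; rewrite phiB // phi_gk phi_k subrr; split=> //; apply: SB.
Qed.

Lemma gen_span j x : S j x -> exists c : nat -> int, x = \sum_(i < j.+1) gen i *~ c i.
Proof.
elim: j x => [|j IHj] x Sx.
  have [k [Sy /(phi0_inj Sy)/eqP]] := gen_reduce Sx.
  by rewrite subr_eq0 => /eqP ->; exists (fun=> k); rewrite big_ord1.
have [k [/phi_ker Sy /Sy /IHj [c y_c]]] := gen_reduce Sx.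
exists (fun i => if i == j.+1 then k else c i); rewrite big_ord_recr /= eqxx.
rewrite -[x](subrK (gen j.+1 *~ k)) y_c; congr (_ + _); apply: eq_bigr => i _.
by rewrite (ltn_eqF (ltn_ord i)).
Qed.

Theorem filtration_free_abelian (P : V -> Prop) :
  (forall x, P x <-> exists j, S j x) -> free_abelian P.
Proof.
move=> PS; exists (fun b => exists i, b = gen i); split; [|split].
- by move=> _ [i ->]; apply/PS; exists i; have [] := genP i.
- move=> s c s_uniq s_gen sum0 b bs.
  have [n s_sub] := seq_image_iota s_gen.
  pose c' i := if gen i \in s then c (gen i) else 0.
  have sum0' : \sum_(i < n) gen i *~ c' i = 0.
    rewrite -[RHS]sum0 (big_uniq_image _ gen_inj s_uniq s_sub) [RHS]big_mkcond /=.
    by apply: eq_bigr => i _; rewrite /c'; case: ifP; rewrite ?mulr0z.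
  have /mapP [i] := s_sub _ bs; rewrite mem_iota add0n => /andP [_ i_lt] b_gi.
  by have := gen_indep sum0' i_lt; rewrite /c' -b_gi bs.
- move=> x /PS [j /gen_span [c ->]].
  set s := [seq gen i | i <- iota 0 j.+1].
  exists s, (fun b => c (index b s)); split; first by move=> _ /mapP [i _ ->]; exists i.
  rewrite big_map -(big_mkord xpredT (fun i => gen i *~ c i)) /index_iota subn0.
  apply: eq_big_seq => i; rewrite mem_iota add0n => /andP [_ i_lt].
  rewrite /s (index_map gen_inj) -[X in index X _](add0n i) -(nth_iota 0 0 i_lt).
  by rewrite index_uniq ?size_iota ?iota_uniq.
Qed.

End FiltrationBasis.

(** * The filtration of H *)

Local Notation "p %:F" := (@FracField.tofrac _ p) : ring_scope.
Local Notation t := (('X : {poly rat})%:F : Qt).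
Local Notation lfrac p k := (p%:F / t ^+ k).

Lemma t_neq0 : t != 0.
Proof. by rewrite tofrac_eq0 polyX_eq0. Qed.

Lemma lfrac_shift (p : {poly rat}) k m : lfrac p k = lfrac ('X^m * p) (k + m).
Proof.
rewrite rmorphM rmorphXn exprD [t ^+ k * _]mulrC invfM mulrACA mulfV ?mul1r //.
by rewrite expf_neq0 ?t_neq0.
Qed.

Lemma lfrac_inj k : injective (fun p : {poly rat} => lfrac p k).
Proof.
move=> p q /mulIf; rewrite invr_eq0 expf_neq0 ?t_neq0 // => /(_ isT) /eqP.
by rewrite tofrac_eq => /eqP.
Qed.

Lemma lfrac_eq (p q : {poly rat}) k l : lfrac p k = lfrac q l -> 'X^l * p = 'X^k * q.
Proof. by rewrite (lfrac_shift p k l) (lfrac_shift q l k) addnC => /lfrac_inj. Qed.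

Lemma lfracB (p q : {poly rat}) k : lfrac p k - lfrac q k = lfrac (p - q) k.
Proof. by rewrite rmorphB mulrBl. Qed.

Lemma numerical1 : numerical 1.
Proof. by exists 0 => n _; rewrite hornerC. Qed.

Lemma numericalB f g : numerical f -> numerical g -> numerical (f - g).
Proof.
move=> [M f_int] [N g_int]; exists (Num.max M N) => n; rewrite ge_max => /andP [Mn Nn].
by rewrite hornerD hornerN rpredB ?f_int ?g_int.
Qed.

Lemma numericalXnM k f : numerical f -> numerical ('X^k * f).
Proof.
move=> [N f_int]; exists N => n Nn.
by rewrite hornerM hornerXn rpredM ?rpredX ?f_int ?intr_int.
Qed.

Lemma inH0 : inH 0.
Proof.
exists 0, 0%N; rewrite rmorph0 mul0r; split=> //.
by exists 0 => n _; rewrite horner0 rpred0.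
Qed.

Lemma inHB x y : inH x -> inH y -> inH (x - y).
Proof.
move=> [f [k [f_num ->]]] [g [l [g_num ->]]].
exists ('X^l * f - 'X^k * g), (k + l)%N.
split; first by apply: numericalB; apply: numericalXnM.
by rewrite (lfrac_shift f k l) (lfrac_shift g l k) [(l + k)%N]addnC lfracB.
Qed.

Definition numer (k : nat) (x : Qt) : {poly rat} :=
  if pselect (exists p, x = lfrac p k) is left ex then sval (cid ex) else 0.

Lemma numerE k p : numer k (lfrac p k) = p.
Proof.
rewrite /numer; case: pselect => [ex|]; last by case; exists p.
by case: (cid ex) => q /= /lfrac_inj.
Qed.

(* [Hlevel j] is [H_j], supported on the exponents [-(j./2) .. uphalf j];
   [Hcoef j] is the coefficient of the exponent added at level [j], which is
   [uphalf j] for odd [j] and [-(j./2)] for even [j]. *)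
Definition Hlevel (j : nat) (x : Qt) : Prop :=
  inH x /\ exists2 p : {poly rat}, (size p <= j.+1)%N & x = lfrac p j./2.

Definition Hcoef (j : nat) (x : Qt) : rat := (numer j./2 x)`_(if odd j then j else 0).

Lemma lfrac_succ j (p : {poly rat}) : lfrac ('X^(odd j) * p) j.+1./2 = lfrac p j./2.
Proof. by rewrite (lfrac_shift p _ (odd j)) addnC -uphalf_half uphalfE. Qed.

Lemma Hlevel0 j : Hlevel j 0.
Proof. by split; [exact: inH0 | exists 0; rewrite ?size_poly0 // rmorph0 mul0r]. Qed.

Lemma HlevelB j x y : Hlevel j x -> Hlevel j y -> Hlevel j (x - y).
Proof.
move=> [Hx [p szp x_p]] [Hy [q szq y_q]]; split; first exact: inHB.
exists (p - q); last by rewrite x_p y_q lfracB.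
by apply: leq_trans (size_polyD _ _) _; rewrite size_polyN geq_max szp.
Qed.

Lemma HcoefB j x y : Hlevel j x -> Hlevel j y -> Hcoef j (x - y) = Hcoef j x - Hcoef j y.
Proof. by move=> [_ [p _ ->]] [_ [q _ ->]]; rewrite /Hcoef lfracB !numerE coefB. Qed.

Lemma Hlevel_succ_repr j x : Hlevel j x ->
  exists2 p : {poly rat}, (size p <= j.+1)%N & x = lfrac ('X^(odd j) * p) j.+1./2.
Proof. by move=> [_ [p szp ->]]; exists p; rewrite ?lfrac_succ. Qed.

Lemma Hlevel_succ j x : Hlevel j x -> Hlevel j.+1 x.
Proof.
move=> /[dup] [[Hx _]] /Hlevel_succ_repr [p szp x_p]; split=> //.
exists ('X^(odd j) * p) => //; rewrite (leq_trans (size_polyMleq _ _)) // size_polyXn.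
by case: (odd j); lia.
Qed.

Lemma Hcoef_succ j x : Hlevel j x -> Hcoef j.+1 x = 0.
Proof.
move=> /Hlevel_succ_repr [p szp ->]; rewrite /Hcoef numerE coefXnM /=.
by case: (odd j) => //=; rewrite subn0 nth_default.
Qed.

Lemma Hcoef0_inj x : Hlevel 0 x -> Hcoef 0 x = 0 -> x = 0.
Proof.
move=> [_ [p szp ->]]; rewrite /Hcoef numerE /= => p0.
by rewrite (size1_polyC szp) p0 rmorph0 mul0r.
Qed.

Lemma Hcoef_ker j x : Hlevel j.+1 x -> Hcoef j.+1 x = 0 -> Hlevel j x.
Proof.
move=> [Hx [p szp x_p]]; rewrite /Hcoef {1}x_p numerE /= => p_top; split=> //.
suff [q szq p_q] : exists2 q : {poly rat}, (size q <= j.+1)%N & p = 'X^(odd j) * q.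
  by exists q; rewrite // x_p p_q lfrac_succ.
case: (odd j) p_top => /= [p0|p_j1]; last first.
  exists p; rewrite ?mul1r //; apply/leq_sizeP => i; rewrite leq_eqVlt => /predU1P [<-//|].
  by move/leq_sizeP: szp; apply.
have /factor_theorem [q p_q] : root p 0 by rewrite /root horner_coef0 p0.
exists q; last by rewrite p_q subr0 mulrC.
have [->|q_neq0] := eqVneq q 0; first by rewrite size_poly0.
by move: szp; rewrite p_q subr0 size_mulX.
Qed.

Lemma Hcoef_denom j : exists2 D : nat, (0 < D)%N &
  forall x, Hlevel j x -> D%:R * Hcoef j x \is a Num.int.
Proof.
have [D D_gt0 D_int] := numerical_coef_denominator j.
exists D => // x [[f [k [f_num x_f]]] [p szp x_p]].
rewrite /Hcoef x_p numerE; apply: (D_int k p szp).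
by rewrite (lfrac_eq (etrans (esym x_p) x_f)); apply: numericalXnM.
Qed.

Lemma Hcoef_nontriv j : exists2 x, Hlevel j x & Hcoef j x != 0.
Proof.
set i := if odd j then j else 0%N.
exists (lfrac 'X^i j./2); last by rewrite /Hcoef numerE coefXn eqxx oner_neq0.
split; last by exists 'X^i; rewrite // size_polyXn /i; case: (odd j).
exists 'X^i, j./2; split=> //.
by rewrite -[X in numerical X]mulr1; apply/numericalXnM/numerical1.
Qed.

Lemma inH_Hlevel x : inH x <-> exists j, Hlevel j x.
Proof.
split=> [Hx|[j []//]]; have [f [k [_ x_f]]] := Hx.
exists (k + size f).*2; split=> //; exists ('X^(size f) * f).
  by apply: leq_trans (size_polyMleq _ _) _; rewrite size_polyXn; lia.
by rewrite doubleK x_f (lfrac_shift f k (size f)).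
Qed.

Theorem theorem1p4 : free_abelian inH.
Proof.
exact: (filtration_free_abelian Hlevel0 HlevelB HcoefB Hlevel_succ Hcoef_succ
  Hcoef0_inj Hcoef_ker Hcoef_denom Hcoef_nontriv inH_Hlevel).
Qed.
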